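(* Let $(X,d,\kappa)$ be a digital metric space where $X$ is finite or $d$ is an $\ell_p$ metric for some $1\le p\le\infty$. Let $T:X\to X$ and $\alpha:X\times X\to[0,\infty)$. Suppose (1) $T$ is $\alpha$-admissible; (2) there exists $x_0\in X$ with $\alpha(x_0,T(x_0))\ge1$; and (3) there exist $\psi,\phi\in\Phi$ such that for all $x,y\in X$, \[\alpha(x,y)\,\psi(d(T(x),T(y)))\le\psi(M(x,y))-\phi(M(x,y)),\] where $M(x,y)=\max\{d(x,y),\ d(x,T(x)),\ d(y,T(y)),\ [d(x,T(y))+d(y,T(x))]/2\}$. Then $T$ has a fixed point. Further, if $u$ and $v$ are fixed points of $T$ with $\alpha(u,v)\ge1$, then $u=v$.
   Context: A digital metric space is a triple $(X,d,\kappa)$ where $X\subset\mathbb{Z}^n$ for some positive integer $n$, $\kappa$ is an adjacency relation on $X$, and $d$ is a metric on $X$. The $\ell_p$ metric on $\mathbb{Z}^n$ is $d(x,y)=(\sum_i|x_i-y_i|^p)^{1/p}$ for $1\le p<\infty$ and $\max_i|x_i-y_i|$ for $p=\infty$. $\Phi$ is the set of functions $\phi:[0,\infty)\to[0,\infty)$ that are increasing, satisfy $\phi(t)=0$ iff $t=0$, and $\phi(t)<t$ for $t>0$. $T$ is $\alpha$-admissible if $\alpha(x,y)\ge1$ implies $\alpha(T(x),T(y))\ge1$. *)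

From HB Require Import structures.
From mathcomp Require Import all_boot all_order all_algebra.
From mathcomp Require Import all_classical all_reals exp.
Set Implicit Arguments. Unset Strict Implicit. Unset Printing Implicit Defensive.
Import Order.TTheory GRing.Theory Num.Theory.
Local Open Scope ring_scope.
Local Open Scope classical_set_scope.

Inductive lp_index (R : realType) := LpFin of R | LpInf.

Definition lp_dist (R : realType) (n : nat) (p : lp_index R)
  (x y : 'rV[int]_n) : R :=
  match p with
  | LpFin q => (\sum_(i < n) `|((x ord0 i - y ord0 i)%:~R : R)| `^ q) `^ q^-1
  | LpInf => \big[Num.max/0]_(i < n) `|((x ord0 i - y ord0 i)%:~R : R)|
  end.

Definition valid_lp_index (R : realType) (p : lp_index R) : Prop :=
  match p with LpFin q => 1 <= q | LpInf => True end.

Definition is_metric_on (R : realType) (T : Type) (X : set T) (d : T -> T -> R) : Prop :=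
  (forall x y, X x -> X y -> 0 <= d x y) /\
  (forall x y, X x -> X y -> (d x y = 0 <-> x = y)) /\
  (forall x y, X x -> X y -> d x y = d y x) /\
  (forall x y z, X x -> X y -> X z -> d x z <= d x y + d y z).

Definition is_lp_metric_on (R : realType) (n : nat) (X : set 'rV[int]_n)
  (d : 'rV[int]_n -> 'rV[int]_n -> R) : Prop :=
  exists p : lp_index R, valid_lp_index p /\
    forall x y, X x -> X y -> d x y = lp_dist p x y.

(* The class Phi of functions [0,oo) -> [0,oo), modelled as R -> R constrained
   on [0,oo): (strictly) increasing, phi t = 0 iff t = 0, phi t < t for t > 0. *)
Definition PhiClass (R : realType) (phi : R -> R) : Prop :=
  (forall t, 0 <= t -> 0 <= phi t) /\
  (forall s t, 0 <= s -> s < t -> phi s < phi t) /\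
  (forall t, 0 <= t -> (phi t = 0 <-> t = 0)) /\
  (forall t, 0 < t -> phi t < t).

Definition alpha_admissible (R : realType) (U : Type) (X : set U)
  (T : U -> U) (alpha : U -> U -> R) : Prop :=
  forall x y, X x -> X y -> 1 <= alpha x y -> 1 <= alpha (T x) (T y).

Definition Mxy (R : realType) (U : Type) (d : U -> U -> R) (T : U -> U) (x y : U) : R :=
  Num.max (Num.max (d x y) (d x (T x)))
          (Num.max (d y (T y)) ((d x (T y) + d y (T x)) / 2)).

From HB Require Import structures.
From mathcomp Require Import all_boot all_order all_algebra.
From mathcomp Require Import all_classical all_reals exp.
From mathcomp Require Import finmap zify lra.
Set Implicit Arguments. Unset Strict Implicit. Unset Printing Implicit Defensive.
Import Order.TTheory GRing.Theory Num.Theory.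
Local Open Scope ring_scope.
Local Open Scope classical_set_scope.

(* Both alternatives on X make distinct points lie at distance at least some
   eps > 0.  Along the Picard orbit x_(k+1) = T x_k, on which alpha >= 1 by
   admissibility, the contractive condition with M(x_k, x_(k+1)) =
   max(d_k, d_(k+1)) forces psi(d_(k+1)) <= psi(d_k) - phi(d_k).  Without a
   fixed point every d_k is >= eps, so psi(d_k) would decrease by phi(eps) > 0
   at each step while staying nonnegative, which is impossible.  Uniqueness
   follows from the condition at two fixed points, where M(u, v) = d(u, v). *)

Definition uniformly_discrete (R : realType) (U : Type) (X : set U)
    (d : U -> U -> R) : Prop :=
  exists2 eps : R, 0 < eps & forall x y, X x -> X y -> x <> y -> eps <= d x y.

Lemma finite_uniformly_discrete (R : realType) (U : choiceType) (X : set U)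
    (d : U -> U -> R) :
  finite_set X -> (forall x y, X x -> X y -> x <> y -> 0 < d x y) ->
  uniformly_discrete X d.
Proof.
move=> fX d_gt0.
have memX x : (x \in (fset_set X : seq U)) = (x \in X).
  by rewrite -(in_fset_set fX x).
pose s := [seq (x, y) | x <- (fset_set X : seq U), y <- (fset_set X : seq U)].
exists (\big[Num.min/1]_(p <- s | p.1 != p.2) d p.1 p.2).
  rewrite big_seq_cond; apply: (big_ind (fun v => 0 < v)) => //.
    by move=> a b a0 b0; rewrite lt_min a0 b0.
  case=> x y /andP[/allpairsP[[x' y'] /= [Xx Xy [-> ->]]] /eqP xy].
  by apply: d_gt0 => //; rewrite -in_setE -memX.
move=> x y Xx Xy /eqP xy.
apply: (@ge_bigmin_seq _ _ _ _ _ (x, y) (fun p => p.1 != p.2)) => //.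
by apply/allpairsP; exists (x, y) => /=; rewrite !memX !in_setE.
Qed.

Lemma powR_ge1 (R : realType) (a r : R) : 1 <= a -> 0 <= r -> 1 <= a `^ r.
Proof. by move=> a_ge1 r_ge0; rewrite -(powRr0 a); apply: ler_powR. Qed.

Lemma lp_dist_ge1 (R : realType) (n : nat) (p : lp_index R) (x y : 'rV[int]_n) :
  valid_lp_index p -> x <> y -> 1 <= lp_dist p x y.
Proof.
move=> p_valid xy.
have [i xy_i] : exists i, x ord0 i != y ord0 i.
  apply: contrapT => /forallNP eq_xy; apply: xy; apply/matrixP => a b.
  by rewrite (ord1 a); apply/eqP/negbNE/negP/eq_xy.
have le1_i : 1 <= `|((x ord0 i - y ord0 i)%:~R : R)|.
  by rewrite -intr_norm ler1z; move: xy_i; lia.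
case: p p_valid => [q|] /= q_ge1; last exact: le_trans le1_i (le_bigmax _ _ i).
have q_ge0 : 0 <= q := le_trans ler01 q_ge1.
apply: powR_ge1; last by rewrite invr_ge0.
rewrite (bigD1 i) //= -[X in X <= _](addr0 1).
apply: lerD; first exact: powR_ge1 le1_i q_ge0.
by apply: sumr_ge0 => j _; apply: powR_ge0.
Qed.

Lemma lp_uniformly_discrete (R : realType) (n : nat) (X : set 'rV[int]_n)
    (d : 'rV[int]_n -> 'rV[int]_n -> R) :
  is_lp_metric_on X d -> uniformly_discrete X d.
Proof.
by case=> p [p_valid dE]; exists 1 => // x y Xx Xy xy; rewrite dE ?lp_dist_ge1.
Qed.

Lemma metric_uniformly_discrete (R : realType) (n : nat) (X : set 'rV[int]_n)
    (d : 'rV[int]_n -> 'rV[int]_n -> R) :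
  is_metric_on X d -> finite_set X \/ is_lp_metric_on X d ->
  uniformly_discrete X d.
Proof.
move=> [d_ge0 [d_eq0 _]] [fX|]; last exact: lp_uniformly_discrete.
apply: finite_uniformly_discrete => // x y Xx Xy xy.
by rewrite lt_neqAle d_ge0 // andbT; apply/eqP => /esym/(d_eq0 x y Xx Xy).
Qed.

Lemma Phi_gt0 (R : realType) (phi : R -> R) (t : R) :
  PhiClass phi -> 0 < t -> 0 < phi t.
Proof.
move=> [phi_ge0 [_ [phi_eq0 _]]] t_gt0.
rewrite lt_neqAle phi_ge0 ?ltW // andbT.
by apply/eqP => /esym/(phi_eq0 t (ltW t_gt0)) t0; rewrite t0 ltxx in t_gt0.
Qed.

Lemma Phi_le (R : realType) (phi : R -> R) (s t : R) :
  PhiClass phi -> 0 <= s -> s <= t -> phi s <= phi t.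
Proof.
move=> [_ [phi_lt _]] s_ge0; rewrite le_eqVlt => /orP[/eqP -> //|st].
exact/ltW/phi_lt.
Qed.

Lemma not_uniformly_decreasing_nonneg (R : realType) (u : nat -> R) (c : R) :
  0 < c -> (forall k, 0 <= u k) -> ~ (forall k, u k.+1 <= u k - c).
Proof.
move=> c_gt0 u_ge0 u_dec.
have u_le k : u k <= u 0%N - k%:R * c.
  elim: k => [|k IH]; first by rewrite mul0r subr0.
  by have := u_dec k; rewrite mulrSr mulrDl mul1r; lra.
have b_ge0 : 0 <= u 0%N / c by rewrite divr_ge0 ?u_ge0 ?ltW.
have := archi_boundP b_ge0; rewrite ltr_pdivrMr //.
set k := Num.Def.archi_bound _.
by have := u_le k; have := u_ge0 k; lra.
Qed.

Section AlphaPsiPhiContraction.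

Variables (R : realType) (U : Type) (X : set U) (d : U -> U -> R).
Variables (T : U -> U) (alpha : U -> U -> R) (psi phi : R -> R).

Hypothesis d_metric : is_metric_on X d.
Hypothesis T_maps : forall x, X x -> X (T x).
Hypothesis psi_Phi : PhiClass psi.
Hypothesis phi_Phi : PhiClass phi.
Hypothesis contractive : forall x y, X x -> X y ->
  alpha x y * psi (d (T x) (T y)) <= psi (Mxy d T x y) - phi (Mxy d T x y).

Let d_ge0 x y : X x -> X y -> 0 <= d x y.
Proof. by case: d_metric => + _; apply. Qed.

Let d_eq0 x y : X x -> X y -> d x y = 0 -> x = y.
Proof. by move=> Xx Xy; case: d_metric => _ [/(_ x y Xx Xy) []]. Qed.

Let d_xx x : X x -> d x x = 0.
Proof. by move=> Xx; case: d_metric => _ [/(_ x x Xx Xx) [_ ->]]. Qed.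

Lemma psi_contractive x y : X x -> X y -> 1 <= alpha x y ->
  psi (d (T x) (T y)) <= psi (Mxy d T x y) - phi (Mxy d T x y).
Proof.
move=> Xx Xy alpha_ge1; apply: le_trans (contractive Xx Xy).
case: psi_Phi => psi_ge0 _; rewrite -[X in X <= _]mul1r.
by apply: ler_wpM2r => //; apply/psi_ge0/d_ge0; apply: T_maps.
Qed.

Lemma Mxy_fixed u v : X u -> X v -> T u = u -> T v = v ->
  Mxy d T u v = d u v.
Proof.
move=> Xu Xv Tu Tv; case: d_metric => _ [_ [d_sym _]].
rewrite /Mxy Tu Tv !d_xx // (d_sym v u) //.
have duv_ge0 := d_ge0 Xu Xv.
have -> : (d u v + d u v) / 2 = d u v by lra.
by rewrite (max_l duv_ge0) (max_r duv_ge0) maxxx.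
Qed.

Lemma Mxy_orbit x : X x ->
  Mxy d T x (T x) = Num.max (d x (T x)) (d (T x) (T (T x))).
Proof.
move=> Xx; have XTx := T_maps Xx; have XTTx := T_maps XTx.
case: d_metric => _ [_ [_ d_tri]].
have := d_tri _ _ _ Xx XTx XTTx; have := d_ge0 Xx XTx; have := d_ge0 XTx XTTx.
rewrite /Mxy d_xx // addr0 maxxx.
set a := d x (T x); set b := d (T x) _; set c := d x _ => b_ge0 a_ge0 c_le.
apply/le_anti/andP; split; last by rewrite ge_max !le_max !lexx !orbT.
rewrite ge_max le_max lexx /= ge_max le_max lexx orbT /= le_max.
by case: (leP a b) => ab; apply/orP; [right|left]; lra.
Qed.

Lemma orbit_step x : X x -> 1 <= alpha x (T x) ->
  psi (d (T x) (T (T x))) <= psi (d x (T x)) - phi (d x (T x)).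
Proof.
move=> Xx alpha_ge1; have XTx := T_maps Xx.
have := psi_contractive Xx XTx alpha_ge1; rewrite Mxy_orbit //.
case: (ltP (d x (T x)) (d (T x) (T (T x)))) => [ab psi_le|//].
have := Phi_gt0 phi_Phi (le_lt_trans (d_ge0 Xx XTx) ab); lra.
Qed.

Lemma fixed_points_eq u v : X u -> X v -> T u = u -> T v = v ->
  1 <= alpha u v -> u = v.
Proof.
move=> Xu Xv Tu Tv alpha_ge1; apply: d_eq0 => //.
have := psi_contractive Xu Xv alpha_ge1; rewrite Mxy_fixed // Tu Tv => psi_le.
case: (ltP 0 (d u v)) => [duv_gt0|duv_le0].
  by have := Phi_gt0 phi_Phi duv_gt0; lra.
by apply/le_anti; rewrite duv_le0 d_ge0.
Qed.

Lemma fixed_point_exists : uniformly_discrete X d ->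
  alpha_admissible X T alpha -> (exists x0, X x0 /\ 1 <= alpha x0 (T x0)) ->
  exists x, X x /\ T x = x.
Proof.
move=> [eps eps_gt0 eps_le] admissible [x0 [Xx0 alpha0]].
apply: contrapT => no_fix.
pose x k := iter k T x0.
have Xx k : X (x k) by elim: k => //= k; apply: T_maps.
have alpha_x k : 1 <= alpha (x k) (x k.+1).
  by elim: k => // k; apply: admissible; apply: Xx.
pose D k := d (x k) (x k.+1).
have D_ge_eps k : eps <= D k.
  by apply: eps_le => // xk_fix; apply: no_fix; exists (x k).
have psiD_ge0 k : 0 <= psi (D k).
  by case: psi_Phi => psi_ge0 _; apply/psi_ge0/d_ge0.
apply: (not_uniformly_decreasing_nonneg (Phi_gt0 phi_Phi eps_gt0) psiD_ge0) => k.
have := orbit_step (Xx k) (alpha_x k); rewrite -/(D k) -/(D k.+1).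
by have := Phi_le phi_Phi (ltW eps_gt0) (D_ge_eps k); lra.
Qed.

End AlphaPsiPhiContraction.

Theorem theorem7p8 (R : realType) (n : nat) (X : set 'rV[int]_n)
  (kappa : 'rV[int]_n -> 'rV[int]_n -> bool)
  (d : 'rV[int]_n -> 'rV[int]_n -> R)
  (T : 'rV[int]_n -> 'rV[int]_n) (alpha : 'rV[int]_n -> 'rV[int]_n -> R)
  (psi phi : R -> R) :
  (0 < n)%N ->
  is_metric_on X d ->
  finite_set X \/ is_lp_metric_on X d ->
  (forall x, X x -> X (T x)) ->
  (forall x y, X x -> X y -> 0 <= alpha x y) ->
  alpha_admissible X T alpha ->
  (exists x0, X x0 /\ 1 <= alpha x0 (T x0)) ->
  PhiClass psi -> PhiClass phi ->
  (forall x y, X x -> X y ->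
     alpha x y * psi (d (T x) (T y)) <= psi (Mxy d T x y) - phi (Mxy d T x y)) ->
  (exists x, X x /\ T x = x) /\
  (forall u v, X u -> X v -> T u = u -> T v = v -> 1 <= alpha u v -> u = v).
Proof.
move=> _ d_metric X_shape T_maps _ admissible start psi_Phi phi_Phi contractive.
have discrete := metric_uniformly_discrete d_metric X_shape.
split; last exact: fixed_points_eq d_metric T_maps psi_Phi phi_Phi contractive.
exact: fixed_point_exists d_metric T_maps psi_Phi phi_Phi contractive
  discrete admissible start.
Qed.
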